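(* Let $\mu_1,\mu_2$ be probabilities on $(\Omega,\mathcal B_\Omega)$ and $\eta_1,\eta_2$ probabilities on $(\Lambda,\mathcal B_\Lambda)$, and consider the product probabilities $\mu_1\times\eta_1,\mu_2\times\eta_2$ on the product $\sigma$-field. Then: (1) $\mu_1\times\eta_1\ll\mu_2\times\eta_2$ if and only if $\mu_1\ll\mu_2$ and $\eta_1\ll\eta_2$; (2) if $\Omega,\Lambda$ are one-sided sequence spaces with shifts $T_\Omega,T_\Lambda$ (product shift $T_\Omega\times T_\Lambda$) and $\mu_2,\eta_2$ are stationary, then $\mu_1\times\eta_1\ll^a\mu_2\times\eta_2$ if and only if $\mu_1\ll^a\mu_2$ and $\eta_1\ll^a\eta_2$.
   Context: $\ll$ denotes absolute continuity. Asymptotic dominance: $\mu\ll^a\eta$ means that for every measurable $E$, $\eta(E)=0$ implies $\lim_{n\to\infty}\mu(T^{-n}E)=0$. Stationary: $\mu(T^{-1}E)=\mu(E)$ for all $E$. *)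

From HB Require Import structures.
From mathcomp Require Import all_boot all_order all_algebra.
From mathcomp Require Import all_classical all_reals all_analysis.
Set Implicit Arguments. Unset Strict Implicit. Unset Printing Implicit Defensive.
Import Order.TTheory GRing.Theory Num.Theory.
Local Open Scope classical_set_scope.
Local Open Scope ring_scope.

Definition seqspace (T : Type) := nat -> T.

HB.instance Definition _ (T : pointedType) := Pointed.on (seqspace T).

Definition seqspace_display : measure_display -> measure_display.
Proof. exact. Qed.

Section seqspace_measurable.
Context {d} {T : measurableType d}.

Definition seqspace_measurable : set (set (seqspace T)) :=
  <<s \bigcup_(n in [set: nat])
        preimage_set_system [set: seqspace T] (fun x : seqspace T => x n)
          measurable >>.

Let seq_set0 : seqspace_measurable set0.
Proof. exact: sigma_algebra0. Qed.

Let seq_setC A : seqspace_measurable A -> seqspace_measurable (~` A).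
Proof. exact: sigma_algebraC. Qed.

Let seq_bigcup (F : (set (seqspace T))^nat) :
  (forall i, seqspace_measurable (F i)) ->
  seqspace_measurable (\bigcup_i (F i)).
Proof. exact: sigma_algebra_bigcup. Qed.

HB.instance Definition _ := @isMeasurable.Build (seqspace_display d)
  (seqspace T) seqspace_measurable seq_set0 seq_setC seq_bigcup.

End seqspace_measurable.

Definition seq_shift {T : Type} (x : seqspace T) : seqspace T := fun n => x n.+1.

Definition prod_seq_shift {A B : Type} (p : seqspace A * seqspace B)
  : seqspace A * seqspace B := (seq_shift p.1, seq_shift p.2).

Section dynamics.
Context {d} {X : measurableType d} {R : realType}.

Definition stationary (T : X -> X) (mu : set X -> \bar R) : Prop :=
  forall E, measurable E -> mu (T @^-1` E) = mu E.

Definition asymp_dominates (T : X -> X) (mu eta : set X -> \bar R) : Prop :=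
  forall E, measurable E -> eta E = 0%E ->
    (fun n => mu ((iter n T) @^-1` E)) @ \oo --> 0%E.

End dynamics.

From HB Require Import structures.
From mathcomp Require Import all_boot all_order all_algebra.
From mathcomp Require Import all_classical all_reals all_analysis.
From mathcomp Require Import measurable_realfun.
Set Implicit Arguments. Unset Strict Implicit. Unset Printing Implicit Defensive.
Import Order.TTheory GRing.Theory Num.Theory.
Local Open Scope classical_set_scope.
Local Open Scope ring_scope.
Local Open Scope ereal_scope.

(* Both parts rest on Fubini: (P x Q)(E) is the P-integral of the Q-measures
   of the sections E_x.  If (P2 x Q2)(E) = 0, then Q2(E_x) = 0 off a P2-null
   set N, so (P1 x Q1)(E) <= P1(N) + sup_{x notin N} Q1(E_x), which vanishes
   under absolute continuity of the factors.  For asymptotic dominance the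
   same bound is applied to T^-n E, whose sections are T^-n of sections of E;
   the second term is then controlled because asymptotic dominance is
   automatically uniform over all null sets: a sequence of null sets that
   defeats uniformity has a null union that defeats pointwise convergence.
   Conversely, rectangles E x Lambda and Omega x F give the marginals. *)

Section product_probability.
Context (R : realType) d1 d2 (X : measurableType d1) (Y : measurableType d2).
Implicit Types (P : probability X R) (Q : probability Y R).

Lemma product_measure1_setXT P Q (A : set X) :
  measurable A -> (P \x Q) (A `*` setT) = P A.
Proof.
by move=> mA; rewrite product_measure1E // [X in _ * X]probability_setT mule1.
Qed.

Lemma product_measure1_setTX P Q (B : set Y) :
  measurable B -> (P \x Q) (setT `*` B) = Q B.
Proof.
by move=> mB; rewrite product_measure1E // [X in X * _]probability_setT mul1e.
Qed.

Lemma product_measure1_le_xsection P Q (E : set (X * Y)) (N : set X) (e : R) :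
  measurable E -> measurable N -> (0 <= e)%R ->
  (forall x, ~ N x -> Q (xsection E x) <= e%:E) ->
  (P \x Q) E <= P N + e%:E.
Proof.
move=> mE mN e0 QEx_le.
have mN1 : measurable_fun setT (fun x => ((\1_N x : R)%:E : \bar R)).
  by apply/measurable_EFinP; exact: measurable_indic.
have me : measurable_fun setT (fun x : X => e%:E) by exact: measurable_cst.
apply: (@le_trans _ _ (\int[P]_x ((\1_N x)%:E + e%:E))).
  apply: (ge0_le_integral P measurableT).
  - by move=> x _; exact: measure_ge0.
  - exact: measurable_fun_xsection.
  - exact: emeasurable_funD.
  move=> x _ /=; have [Nx|Nx] := boolP (x \in N).
    rewrite indicE Nx (le_trans (probability_le1 _ _)) ?leeDl ?lee_fin //.
    exact: measurable_xsection.
  by rewrite indicE (negbTE Nx) add0e; apply: QEx_le => /mem_set; exact/negP.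
rewrite (ge0_integralD P measurableT) // integral_indic // setIT.
by rewrite integral_cst // [X in _ * X]probability_setT mule1.
Qed.

Lemma product_measure1_null_xsection P Q (E : set (X * Y)) :
  measurable E -> (P \x Q) E = 0 ->
  exists N, [/\ measurable N, P N = 0 & forall x, ~ N x -> Q (xsection E x) = 0].
Proof.
move=> mE PQE0; have mQEx := measurable_fun_xsection Q mE.
have : \int[P]_(x in setT) `|(Q \o xsection E) x| = 0.
  rewrite -PQE0; apply: eq_integral => x _.
  by rewrite gee0_abs //; exact: measure_ge0.
move/(ae_eq_integral_abs P measurableT mQEx) => [N [mN N0 subN]].
exists N; split => // x Nx; apply: contra_notP Nx => QEx.
by apply: subN => /= /(_ I).
Qed.

Lemma product_measure1_dominates (mu1 mu2 : probability X R)
    (eta1 eta2 : probability Y R) :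
  (mu1 \x eta1) `<< (mu2 \x eta2) <-> (mu1 `<< mu2 /\ eta1 `<< eta2).
Proof.
split=> [/null_content_dominatesP dom|].
  split; apply/null_content_dominatesP => A mA A0.
  - have PQ0 : (mu2 \x eta2) (A `*` setT) = 0.
      by rewrite product_measure1E // A0 mul0e.
    rewrite -(product_measure1_setXT mu1 eta1) //.
    exact: dom (measurableX mA measurableT) PQ0.
  - have PQ0 : (mu2 \x eta2) (setT `*` A) = 0.
      by rewrite product_measure1E // A0 mule0.
    rewrite -(product_measure1_setTX mu1 eta1) //.
    exact: dom (measurableX measurableT mA) PQ0.
move=> [/null_content_dominatesP dom_mu /null_content_dominatesP dom_eta].
apply/null_content_dominatesP => E mE E0.
have [N [mN N0 EN0]] := product_measure1_null_xsection mE E0.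
apply/eqP; rewrite eq_le measure_ge0 andbT -(dom_mu N mN N0) -[X in _ <= X]adde0.
apply: product_measure1_le_xsection => // x Nx.
by rewrite (dom_eta _ (measurable_xsection _ mE) (EN0 x Nx)).
Qed.

End product_probability.

Section nonnegative_sequence.
Context (R : realType).

Lemma cvge0_nonnegP (u : nat -> \bar R) : (forall n, 0 <= u n) ->
  u @ \oo --> 0 <-> forall e : R, (0 < e)%R -> \forall n \near \oo, u n <= e%:E.
Proof.
move=> u_ge0; split=> [/fine_cvgP [u_fin u_cvg] e e0|u_le].
  near=> n; rewrite -(fineK (_ : u n \is a fin_num)); last by near: n.
  rewrite lee_fin (le_trans (ler_norm _)) //; near: n.
  exact: (cvgr0Pnorm_le _).1 u_cvg e e0.
apply/fine_cvgP; split.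
  apply: filterS (u_le 1%R ltr01) => n un_le1.
  by rewrite ge0_fin_numE // (le_lt_trans un_le1) ?ltry.
apply/cvgr0Pnorm_le => e e0; apply: filterS (u_le e e0) => n /=.
by move: (u_ge0 n); case: (u n) => [r| |] //= r0; rewrite lee_fin ger0_norm.
Unshelve. all: by end_near.
Qed.

End nonnegative_sequence.

Section asymptotic_dominance.
Context (R : realType) d (X : measurableType d) (T : X -> X).
Hypothesis mT : measurable_fun setT T.

Lemma measurable_iter n : measurable_fun setT (iter n T).
Proof.
elim: n => [|n IHn]; first exact: measurable_id.
exact: measurableT_comp mT IHn.
Qed.

Lemma measurable_preimage_iter n (A : set X) :
  measurable A -> measurable (iter n T @^-1` A).
Proof. by move=> mA; rewrite -[_ @^-1` _]setTI; exact: measurable_iter. Qed.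

Lemma asymp_dominates_uniform (mu eta : {measure set X -> \bar R}) :
  asymp_dominates T mu eta -> forall e : R, (0 < e)%R ->
  \forall n \near \oo, forall G, measurable G -> eta G = 0 ->
    mu (iter n T @^-1` G) <= e%:E.
Proof.
move=> dom e e0.
pose bad n G := [/\ measurable G, eta G = 0 & e%:E < mu (iter n T @^-1` G)].
pose worst n G := [/\ measurable G, eta G = 0 &
  forall G', bad n G' -> e%:E < mu (iter n T @^-1` G)].
have /choice [Gs Gs_worst] : forall n, exists G, worst n G.
  move=> n; have [[G bG]|nobad] := pselect (exists G, bad n G).
    by case: bG => mG G0 GP; exists G; split.
  exists set0; split=> [||G' bG']; [exact: measurable0|exact: measure0|].
  by case: nobad; exists G'.
have mU : measurable (\bigcup_k Gs k).
  by apply: bigcup_measurable => k _; have [] := Gs_worst k.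
have U0 : eta (\bigcup_k Gs k) = 0.
  apply/negligibleP => //; apply: negligible_bigcup => k.
  by have [mk k0 _] := Gs_worst k; apply/negligibleP.
have := (cvge0_nonnegP (fun n => measure_ge0 _ _)).1 (dom _ mU U0) e e0.
apply: filterS => n muU_le G mG G0.
rewrite leNgt; apply/negP => muG_gt.
have [mGn _ /(_ G (And3 mG G0 muG_gt)) muGn_gt] := Gs_worst n.
move: muU_le; rewrite leNgt => /negP; apply; apply: (lt_le_trans muGn_gt).
apply: le_measure; rewrite ?inE; try exact: measurable_preimage_iter.
by move=> x /= Gnx; exists n.
Qed.

End asymptotic_dominance.

Definition prod_map {X X' Y Y' : Type} (f : X -> X') (g : Y -> Y') (p : X * Y)
  : X' * Y' := (f p.1, g p.2).

Lemma iter_prod_map {X Y : Type} (T : X -> X) (S : Y -> Y) n (p : X * Y) :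
  iter n (prod_map T S) p = (iter n T p.1, iter n S p.2).
Proof. by elim: n => [|n IHn] /=; [case: p|rewrite IHn]. Qed.

Section product_asymptotic_dominance.
Context (R : realType) d1 d2 (X : measurableType d1) (Y : measurableType d2).
Variables (T : X -> X) (S : Y -> Y).
Hypotheses (mT : measurable_fun setT T) (mS : measurable_fun setT S).

Lemma measurable_prod_map : measurable_fun setT (prod_map T S).
Proof.
by apply: measurable_fun_pair; apply: measurableT_comp;
  [exact: mT|exact: measurable_fst|exact: mS|exact: measurable_snd].
Qed.

Lemma preimage_iter_prod_map_setX n (A : set X) (B : set Y) :
  iter n (prod_map T S) @^-1` (A `*` B) =
  (iter n T @^-1` A) `*` (iter n S @^-1` B).
Proof. by apply/seteqP; split=> -[x y] /=; rewrite iter_prod_map. Qed.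

Lemma xsection_preimage_iter_prod_map n (E : set (X * Y)) x :
  xsection (iter n (prod_map T S) @^-1` E) x =
  iter n S @^-1` xsection E (iter n T x).
Proof.
apply/seteqP; split=> y;
  by rewrite /xsection /preimage /= !in_setE /= iter_prod_map.
Qed.

Lemma asymp_dominates_prod_marginals (mu1 mu2 : probability X R)
    (eta1 eta2 : probability Y R) :
  asymp_dominates (prod_map T S) (mu1 \x eta1) (mu2 \x eta2) ->
  asymp_dominates T mu1 mu2 /\ asymp_dominates S eta1 eta2.
Proof.
move=> dom; split=> A mA A0.
- have PQ0 : (mu2 \x eta2) (A `*` setT) = 0.
    by rewrite product_measure1E // [X in X * _](_ : _ = 0) ?mul0e.
  suff -> : (fun n => mu1 (iter n T @^-1` A)) =
      fun n => (mu1 \x eta1) (iter n (prod_map T S) @^-1` (A `*` setT)).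
    exact: dom (measurableX mA measurableT) PQ0.
  apply: funext => n.
  rewrite preimage_iter_prod_map_setX preimage_setT product_measure1_setXT //.
  exact: measurable_preimage_iter.
- have PQ0 : (mu2 \x eta2) (setT `*` A) = 0.
    by rewrite product_measure1E // [X in _ * X](_ : _ = 0) ?mule0.
  suff -> : (fun n => eta1 (iter n S @^-1` A)) =
      fun n => (mu1 \x eta1) (iter n (prod_map T S) @^-1` (setT `*` A)).
    exact: dom (measurableX measurableT mA) PQ0.
  apply: funext => n.
  rewrite preimage_iter_prod_map_setX preimage_setT product_measure1_setTX //.
  exact: measurable_preimage_iter.
Qed.

Lemma asymp_dominates_prod (mu1 mu2 : probability X R)
    (eta1 eta2 : probability Y R) :
  asymp_dominates T mu1 mu2 -> asymp_dominates S eta1 eta2 ->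
  asymp_dominates (prod_map T S) (mu1 \x eta1) (mu2 \x eta2).
Proof.
move=> dom_mu dom_eta E mE E0.
have [N [mN N0 EN0]] := product_measure1_null_xsection mE E0.
have muN_le := (cvge0_nonnegP (fun n => measure_ge0 _ _)).1 (dom_mu N mN N0).
have eta_unif := asymp_dominates_uniform mS dom_eta.
apply/cvge0_nonnegP => [n|e e0]; first exact: measure_ge0.
have e2 : (0 < e / 2)%R by rewrite divr_gt0.
near=> n.
have muN_le_n : mu1 (iter n T @^-1` N) <= (e / 2)%:E by near: n; exact: muN_le.
have eta_le_n : forall G, measurable G -> eta2 G = 0 ->
    eta1 (iter n S @^-1` G) <= (e / 2)%:E by near: n; exact: eta_unif.
apply: le_trans (product_measure1_le_xsection mu1
  (measurable_preimage_iter measurable_prod_map n mE)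
  (measurable_preimage_iter mT n mN) (ltW e2) _) _.
  move=> x Nx; rewrite xsection_preimage_iter_prod_map.
  by apply: eta_le_n; [exact: measurable_xsection|exact: EN0].
by rewrite (le_trans (leeD muN_le_n (lexx _))) // -EFinD -splitr.
Unshelve. all: by end_near.
Qed.

Lemma asymp_dominates_prodP (mu1 mu2 : probability X R)
    (eta1 eta2 : probability Y R) :
  asymp_dominates (prod_map T S) (mu1 \x eta1) (mu2 \x eta2) <->
  asymp_dominates T mu1 mu2 /\ asymp_dominates S eta1 eta2.
Proof.
split; first exact: asymp_dominates_prod_marginals.
by move=> [dom_mu dom_eta]; exact: asymp_dominates_prod.
Qed.

End product_asymptotic_dominance.

Lemma measurable_seq_shift d (A : measurableType d) :
  measurable_fun setT (@seq_shift A).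
Proof.
apply: (@measurability _ _ _ _ setT _ (\bigcup_(n in [set: nat])
  preimage_set_system [set: seqspace A] (fun x : seqspace A => x n) measurable)).
  by [].
move=> _ [_ [k _ [B mB <-]] <-]; apply: sub_sigma_algebra.
by exists k.+1 => //; exists B => //; rewrite !setTI.
Qed.

Theorem lemma20 (R : realType) :
  (* (1) absolute continuity of product probabilities *)
  (forall (d1 d2 : measure_display)
     (Omega : measurableType d1) (Lambda : measurableType d2)
     (mu1 mu2 : probability Omega R) (eta1 eta2 : probability Lambda R),
     (mu1 \x eta1) `<< (mu2 \x eta2) <-> (mu1 `<< mu2 /\ eta1 `<< eta2))
  /\
  (* (2) asymptotic dominance on one-sided sequence spaces *)
  (forall (d1 d2 : measure_display)
     (A : measurableType d1) (B : measurableType d2)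
     (mu1 mu2 : probability (seqspace A) R)
     (eta1 eta2 : probability (seqspace B) R),
     stationary seq_shift mu2 -> stationary seq_shift eta2 ->
     (asymp_dominates prod_seq_shift (mu1 \x eta1) (mu2 \x eta2) <->
      (asymp_dominates seq_shift mu1 mu2 /\ asymp_dominates seq_shift eta1 eta2))).
Proof.
split=> [d1 d2 Omega Lambda|d1 d2 A B mu1 mu2 eta1 eta2 _ _].
  exact: product_measure1_dominates.
exact: (asymp_dominates_prodP (@measurable_seq_shift _ A)
  (@measurable_seq_shift _ B)).
Qed.
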